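(* Let $P$ be a reduced punctured Preparata code of length $n$, and let $r,s\in\{1,\ldots,n\}$ with $r\neq s$. Then there exists exactly one coordinate $t\in\{1,\ldots,n\}$ such that every codeword of $P$ of weight $5$ having ones in coordinates $r$ and $s$ has a zero in coordinate $t$.
   Context: $E^n$ is the set of binary vectors of length $n$ with the Hamming distance $d$; the weight of $x$ is its distance to $0^n$ and $\mathrm{supp}(x)=\{i: x_i=1\}$. A code is a subset of $E^n$; it is reduced if it contains the all-zero vector $0^n$. A Preparata code is a binary code of length $2^m$ ($m\ge 4$ even) with minimum distance $6$ and maximum possible cardinality among binary codes of that length and minimum distance (cardinality $2^{2^m}/2^{2m}$). A punctured Preparata code is obtained from a Preparata code by deleting one coordinate; it has length $n=2^m-1$ and minimum distance $5$. For a reduced punctured Preparata code, the supports of its codewords of weight $5$ form a $2$-$(n,5,(n-3)/3)$ design (every $2$-subset of coordinates lies in exactly $(n-3)/3$ of these supports). *)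

From mathcomp Require Import all_boot.
Set Implicit Arguments. Unset Strict Implicit. Unset Printing Implicit Defensive.

Definition bvec (n : nat) := {ffun 'I_n -> bool}.

Definition zerov (n : nat) : bvec n := [ffun => false].

Definition hdist (n : nat) (x y : bvec n) : nat := #|[set i | x i != y i]|.

Definition wt (n : nat) (x : bvec n) : nat := hdist x (zerov n).

Definition supp (n : nat) (x : bvec n) : {set 'I_n} := [set i | x i].

Definition reduced (n : nat) (C : {set bvec n}) : Prop := zerov n \in C.

Definition min_dist (n : nat) (C : {set bvec n}) (d : nat) : Prop :=
  (forall x y, x \in C -> y \in C -> x != y -> d <= hdist x y) /\
  (exists x y, [/\ x \in C, y \in C, x != y & hdist x y = d]).

Definition preparata (N : nat) (C : {set bvec N}) : Prop :=
  exists m : nat, [/\ ~~ odd m, 4 <= m, N = 2 ^ m,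
    min_dist C 6 & #|C| = 2 ^ (2 ^ m) %/ 2 ^ (2 * m)].

Definition puncture (n : nat) (j : 'I_n.+1) (x : bvec n.+1) : bvec n :=
  [ffun i : 'I_n => x (lift j i)].

Definition punctured_preparata (n : nat) (P : {set bvec n}) : Prop :=
  exists (C : {set bvec n.+1}) (j : 'I_n.+1),
    preparata C /\ P = [set puncture j x | x in C].

(* Pass to the family Q of supports of P: it contains the empty set, has minimum
   distance 5, and the parameters give |Q| (n+1)^2 = 2^(n+1).  Two codewords of
   weight 5 through r and s meet only in {r, s}, so there are at most (n-3)/3 of
   them (3 divides n = 4^(m/2) - 1), and likewise in every translate Q + c.
   Double counting the pairs (c, x) with x at distance 3 from a codeword c shows
   that these bounds are all attained: a word at distance >= 3 from Q lies at
   distance 3 from at most n/3 codewords, and a word at distance 3 from c and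
   within 2 of another codeword c1 is a 3-subset of the weight-5 word c1 + c of
   Q + c.  Hence the remainders of the (n-3)/3 weight-5 words through r and s,
   together with r and s, cover all coordinates but exactly one, t. *)

From mathcomp Require Import all_boot zify.
Set Implicit Arguments. Unset Strict Implicit. Unset Printing Implicit Defensive.

Section SymmetricDifference.

Variable T : finType.
Implicit Types A B C : {set T}.

Definition symdiff A B : {set T} := (A :\: B) :|: (B :\: A).

Definition sdist A B : nat := #|symdiff A B|.

Lemma in_symdiff A B i : (i \in symdiff A B) = (i \in A) (+) (i \in B).
Proof. by rewrite !inE; case: (i \in A); case: (i \in B). Qed.

Lemma symdiffC A B : symdiff A B = symdiff B A.
Proof. by apply/setP=> i; rewrite !in_symdiff addbC. Qed.

Lemma symdiffK C : involutive (symdiff^~ C).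
Proof. by move=> A; apply/setP=> i; rewrite !in_symdiff -addbA addbb addbF. Qed.

Lemma symdiffs0 A : symdiff A set0 = A.
Proof. by apply/setP=> i; rewrite !in_symdiff inE addbF. Qed.

Lemma symdiff_translate A B C : symdiff (symdiff A C) (symdiff B C) = symdiff A B.
Proof.
by apply/setP=> i; rewrite !in_symdiff; case: (i \in A); case: (i \in B); case: (i \in C).
Qed.

Lemma sdistC A B : sdist A B = sdist B A.
Proof. by rewrite /sdist symdiffC. Qed.

Lemma sdist_translate A B C : sdist (symdiff A C) (symdiff B C) = sdist A B.
Proof. by rewrite /sdist symdiff_translate. Qed.

Lemma sdist_cardI A B : sdist A B + 2 * #|A :&: B| = #|A| + #|B|.
Proof.
rewrite /sdist; have -> : symdiff A B = (A :|: B) :\: (A :&: B).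
  by apply/setP=> i; rewrite !inE; case: (i \in A); case: (i \in B).
have sIU : A :&: B \subset A :|: B by apply/subsetP=> i; rewrite !inE => /andP[->].
rewrite cardsD (setIidPr sIU) -cardsUI.
have := subset_leq_card sIU; lia.
Qed.

Lemma sdist_triangle A B C : sdist A B <= sdist A C + sdist C B.
Proof.
apply: leq_trans (leq_card_setU (symdiff A C) (symdiff C B)).
apply: subset_leq_card; apply/subsetP=> i; rewrite in_setU !in_symdiff.
by case: (i \in A); case: (i \in B); case: (i \in C).
Qed.

Lemma card_sphere C k : \sum_(A : {set T}) (sdist A C == k : nat) = 'C(#|T|, k).
Proof.
rewrite (reindex_inj (can_inj (symdiffK C))) -card_draws -sum1_card [RHS]big_mkcond /=.
by apply: eq_bigr => A _; rewrite /sdist symdiffK inE; case: (_ == k).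
Qed.

End SymmetricDifference.

Lemma sum_mem_card (T : finType) (A : {pred T}) : \sum_(t : T) (t \in A : nat) = #|A|.
Proof. by rewrite -sum1_card [RHS]big_mkcond; apply: eq_bigr => t _; case: (t \in A). Qed.

Lemma sum_bool_exists (I : finType) (Z : {pred I}) (P : pred I) :
  {in Z &, forall i j, P i -> P j -> i = j} ->
  \sum_(i in Z) (P i : nat) = [exists i in Z, P i].
Proof.
move=> Puniq; case: existsP => [[i /andP[Zi Pi]]|noP].
  rewrite (bigD1 i) //= Pi big1 // => j /andP[Zj ji].
  by case: (boolP (P j)) => // Pj; rewrite (Puniq _ _ Zj Zi Pj Pi) eqxx in ji.
by rewrite big1 // => i Zi; case: (boolP (P i)) => // Pi; case: noP; exists i; rewrite Zi.
Qed.

Lemma card_bigcup_disjoint (I T : finType) (Z : {pred I}) (F : I -> {set T}) :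
  {in Z &, forall i j t, t \in F i -> t \in F j -> i = j} ->
  #|\bigcup_(i in Z) F i| = \sum_(i in Z) #|F i|.
Proof.
move=> Fdisj; rewrite -sum_mem_card.
under [RHS]eq_bigr do rewrite -sum_mem_card.
rewrite [RHS]exchange_big /=; apply: eq_bigr => t _.
rewrite sum_bool_exists; last by move=> i j Zi Zj; apply: Fdisj.
congr (nat_of_bool _); apply/bigcupP/existsP => [[i Zi ti]|[i /andP[Zi ti]]].
  by exists i; rewrite ?Zi.
by exists i.
Qed.

Section Codes.

Variable T : finType.
Implicit Types (Q : {set {set T}}) (x c D : {set T}) (r s t : T).
Local Notation n := #|T|.

Definition mindist5 Q :=
  forall A B, A \in Q -> B \in Q -> A != B -> 5 <= sdist A B.

Definition covered Q x := [exists c in Q, sdist x c <= 2].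

Definition blocks Q := [set D in Q | #|D| == 5].

Definition blocks_through Q r s := [set D in Q | [&& #|D| == 5, r \in D & s \in D]].

Definition translate Q c := [set D | symdiff D c \in Q].

Definition blocks_cover Q r s := \bigcup_(D in blocks_through Q r s) (D :\: [set r; s]).

Lemma coveredE Q x : mindist5 Q ->
  (covered Q x : nat) = \sum_(c in Q) (sdist x c <= 2 : nat).
Proof.
move=> Q5; rewrite sum_bool_exists // => A B QA QB xA xB; apply/eqP; apply: contraT => AB.
have := Q5 _ _ QA QB AB; have := sdist_triangle A B x; rewrite (sdistC A x); lia.
Qed.

(* The balls of radius 2 around the codewords are disjoint. *)
Lemma card_covered Q : mindist5 Q ->
  \sum_x (covered Q x : nat) = #|Q| * (1 + n + 'C(n, 2)).
Proof.
move=> Q5; under eq_bigr do rewrite coveredE //.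
have -> : 1 + n + 'C(n, 2) = 'C(n, 0) + 'C(n, 1) + 'C(n, 2) by rewrite bin0 bin1.
rewrite exchange_big /= -sum_nat_const; apply: eq_bigr => c _.
rewrite -!(card_sphere c) -!big_split /=; apply: eq_bigr => x _.
by case: (sdist x c) => [|[|[|]]].
Qed.

Lemma card_uncovered Q : mindist5 Q -> 2 * 2 ^ n = #|Q| * n.+1 ^ 2 ->
  2 * \sum_x (~~ covered Q x : nat) = #|Q| * n.-1.
Proof.
move=> Q5 Qcard.
have covE : \sum_x (covered Q x : nat) + \sum_x (~~ covered Q x : nat) = 2 ^ n.
  rewrite -big_split /= -cardsT -card_powerset powersetT -sum1_card.
  by rewrite [RHS]big_mkcond; apply: eq_bigr => x _; rewrite inE; case: (covered Q x).
have C2 : 'C(n, 2) * 2 = n * n.-1 by rewrite -[2 in LHS]/(2`!) bin_ffact !ffactnS ffactn0 muln1.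
move: covE Qcard; rewrite card_covered //.
case: n C2 => [|m] /= C2; nia.
Qed.

(* Codewords at distance 3 from x that differ from x in a common coordinate
   would be within distance 4 of each other. *)
Lemma card_codewords_dist3 Q x : mindist5 Q ->
  3 * \sum_(c in Q) (sdist x c == 3 : nat) <= n.
Proof.
move=> Q5; pose Z := [set c in Q | sdist x c == 3].
have -> : 3 * \sum_(c in Q) (sdist x c == 3 : nat) = \sum_(c in Z) #|symdiff x c|.
  rewrite big_distrr /= big_mkcond [RHS]big_mkcond /=; apply: eq_bigr => c _.
  by rewrite inE; case: (c \in Q); case: eqP.
rewrite -card_bigcup_disjoint ?max_card // => A B.
rewrite !inE => /andP[QA /eqP xA] /andP[QB /eqP xB] t tA tB.
apply/eqP; apply: contraT => AB; have := Q5 _ _ QA QB AB.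
rewrite -(sdist_translate A B x) (symdiffC A x) (symdiffC B x).
have := sdist_cardI (symdiff x A) (symdiff x B).
have : 0 < #|symdiff x A :&: symdiff x B| by apply/card_gt0P; exists t; rewrite inE tA.
rewrite /sdist in xA xB *; lia.
Qed.

Lemma blocks_cover_disjoint Q r s : mindist5 Q -> r != s ->
  {in blocks_through Q r s &, forall A B t,
     t \in A :\: [set r; s] -> t \in B :\: [set r; s] -> A = B}.
Proof.
move=> Q5 rs A B; rewrite !inE => /and4P[QA /eqP A5 rA sA] /and4P[QB /eqP B5 rB sB] t.
move=> /setDP[tA trs] /setDP[tB _]; apply/eqP; apply: contraT => AB.
have := Q5 _ _ QA QB AB; have := sdist_cardI A B; rewrite A5 B5.
have rsI : [set r; s] \subset A :&: B.
  by apply/subsetP=> i; rewrite !inE => /orP[]/eqP->; rewrite ?rA ?rB ?sA ?sB.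
have : t |: [set r; s] \subset A :&: B by rewrite subUset sub1set inE tA tB rsI.
by move/subset_leq_card; rewrite cardsU1 trs cards2 rs; lia.
Qed.

Lemma card_blocks_cover Q r s : mindist5 Q -> r != s ->
  #|blocks_cover Q r s| = 3 * #|blocks_through Q r s|.
Proof.
move=> Q5 rs; rewrite card_bigcup_disjoint; last exact: blocks_cover_disjoint.
rewrite mulnC -sum_nat_const; apply: eq_bigr => D; rewrite !inE => /and4P[_ /eqP D5 rD sD].
have rsD : [set r; s] \subset D by apply/subsetP=> i; rewrite !inE => /orP[]/eqP->.
by rewrite cardsD (setIidPr rsD) cards2 rs D5.
Qed.

Lemma blocks_cover_sub Q r s : blocks_cover Q r s \subset ~: [set r; s].
Proof. by apply/subsetP=> t /bigcupP[D _]; rewrite !inE => /andP[]. Qed.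

Lemma blocks_through_bound Q r s : mindist5 Q -> r != s ->
  3 * #|blocks_through Q r s| <= n - 2.
Proof.
move=> Q5 rs; rewrite -card_blocks_cover //.
have := subset_leq_card (blocks_cover_sub Q r s).
have := cardsC [set r; s]; rewrite cards2 rs; lia.
Qed.

Lemma card_ordered_pairs D : #|D| = 5 ->
  \sum_r \sum_s ((r != s) && (r \in D) && (s \in D) : nat) = 20.
Proof.
move=> D5; rewrite -[20]/(5 * 4) -D5 -sum_mem_card big_distrl /=; apply: eq_bigr => r _.
case: (boolP (r \in D)) => rD; last by rewrite big1 // => s _; rewrite andbF.
rewrite mul1n -[4]/(5.-1) -D5 (cardsD1 r D) rD add1n -sum_mem_card; apply: eq_bigr => s _.
by rewrite !inE andbT eq_sym.
Qed.

Lemma card_blocks_pairs Q :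
  20 * #|blocks Q| = \sum_r \sum_s (r != s) * #|blocks_through Q r s|.
Proof.
have pairsE r s : (r != s) * #|blocks_through Q r s| =
    \sum_(D in blocks Q) ((r != s) && (r \in D) && (s \in D) : nat).
  rewrite -sum1_card big_distrr [RHS]big_mkcond [LHS]big_mkcond /=; apply: eq_bigr => D _.
  rewrite !inE; case: (D \in Q); case: (#|D| == 5) => //=.
  by case: (r != s); case: (r \in D); case: (s \in D).
under eq_bigr do under eq_bigr do rewrite pairsE.
under eq_bigr do rewrite exchange_big.
rewrite exchange_big /= mulnC -sum_nat_const; apply: eq_bigr => D.
by rewrite inE => /andP[_ /eqP D5]; rewrite card_ordered_pairs.
Qed.

Lemma card_blocks_leqif Q : mindist5 Q -> 3 %| n ->
  60 * #|blocks Q| <= n * (n.-1 * (n - 3))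
    ?= iff [forall r, forall s, (r != s) ==> (3 * #|blocks_through Q r s| == n - 3)].
Proof.
move=> Q5 /dvdnP[q nq].
have -> : n * (n.-1 * (n - 3)) = \sum_(r : T) \sum_(s : T) (r != s) * (n - 3).
  rewrite -sum_nat_const; apply: eq_bigr => r _.
  rewrite -big_distrl /=; congr (_ * _).
  by rewrite -(cardC1 r) -sum_mem_card; apply: eq_bigr => s _; rewrite !inE eq_sym.
rewrite -[60]/(3 * 20) -mulnA card_blocks_pairs big_distrr /=.
apply: leqif_sum => r _; rewrite big_distrr /=; apply: leqif_sum => s _.
case: (boolP (r != s)) => rs /=; last exact: leqif_refl.
rewrite !mul1n; apply: leqif_eq; have := blocks_through_bound Q5 rs.
(* [set] merges copies of #|T| that differ only in hidden coercions, which lia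
   would otherwise treat as distinct atoms. *)
move: nq; set b := #|blocks_through _ _ _|; set m := #|T|; lia.
Qed.

Lemma translate0 Q : translate Q set0 = Q.
Proof. by apply/setP=> D; rewrite inE symdiffs0. Qed.

Lemma translate_mindist5 Q c : mindist5 Q -> mindist5 (translate Q c).
Proof.
move=> Q5 A B; rewrite !inE => QA QB AB; rewrite -(sdist_translate A B c); apply: Q5 => //.
by apply: contra AB => /eqP/(can_inj (symdiffK c))->.
Qed.

Lemma card_covered_dist3 Q c : mindist5 Q -> c \in Q ->
  \sum_x ((sdist x c == 3) && covered Q x : nat) <= 10 * #|blocks (translate Q c)|.
Proof.
move=> Q5 Qc.
apply: (@leq_trans (\sum_x \sum_(D in blocks (translate Q c))
          ((symdiff x c \subset D) && (sdist x c == 3) : nat))).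
  apply: leq_sum => x _; case: (boolP (sdist x c == 3)) => //= /eqP xc3.
  case: (boolP (covered Q x)) => //= /existsP[c1 /andP[Qc1 xc1]].
  have c1c : c1 != c by apply: contraTneq xc1 => ->; rewrite xc3.
  pose D := symdiff c1 c.
  have D5 : #|D| = 5.
    have := Q5 _ _ Qc1 Qc c1c; have := sdist_triangle c1 c x.
    by rewrite /D (sdistC c1 x) /sdist in xc3 xc1 *; lia.
  have DQ : D \in blocks (translate Q c) by rewrite !inE symdiffK Qc1 D5 eqxx.
  have xcD : symdiff x c \subset D.
    apply/setIidPl/eqP; rewrite eqEcard subsetIl /=.
    have := sdist_cardI (symdiff x c) D.
    by rewrite /sdist /D symdiff_translate D5 in xc1 xc3 *; lia.
  by rewrite (bigD1 D) //= xcD.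
rewrite exchange_big /= mulnC -sum_nat_const; apply: eq_leq; apply: eq_bigr => D.
rewrite inE => /andP[_ /eqP D5].
rewrite (reindex_inj (can_inj (symdiffK c))) /= -[10]/('C(5, 3)) -D5 -cards_draws -sum_mem_card.
by apply: eq_bigr => y _; rewrite /sdist symdiffK inE.
Qed.

Lemma sum_card_blocks_translate_lb Q : mindist5 Q -> 2 * 2 ^ n = #|Q| * n.+1 ^ 2 ->
  #|Q| * (n * (n.-1 * (n - 3))) <= \sum_(c in Q) 60 * #|blocks (translate Q c)|.
Proof.
move=> Q5 Qcard.
have sphere3 : \sum_(c in Q) \sum_x ((sdist x c == 3) && ~~ covered Q x : nat)
             + \sum_(c in Q) \sum_x ((sdist x c == 3) && covered Q x : nat) = #|Q| * 'C(n, 3).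
  rewrite -big_split -sum_nat_const; apply: eq_bigr => c _; rewrite -big_split -(card_sphere c).
  by apply: eq_bigr => x _; case: (sdist x c == 3); case: (covered Q x).
have uncovered3 : 3 * \sum_(c in Q) \sum_x ((sdist x c == 3) && ~~ covered Q x : nat)
                  <= n * \sum_x (~~ covered Q x : nat).
  rewrite exchange_big /= !big_distrr /=; apply: leq_sum => x _.
  case: (boolP (covered Q x)) => /= [_|_]; first by rewrite big1 // => c _; rewrite andbF.
  by rewrite muln1; apply: leq_trans (card_codewords_dist3 x Q5); rewrite leq_mul2l;
     apply/orP; right; apply: leq_sum => c _; rewrite andbT.
have covered3 : \sum_(c in Q) \sum_x ((sdist x c == 3) && covered Q x : nat)
                <= \sum_(c in Q) 10 * #|blocks (translate Q c)|.
  by apply: leq_sum => c Qc; apply: card_covered_dist3.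
have uncov := card_uncovered Q5 Qcard.
have C3 : 'C(n, 3) * 6 = n * (n.-1 * n.-2).
  by rewrite -[6]/(3`!) bin_ffact !ffactnS ffactn0 muln1.
have -> : \sum_(c in Q) 60 * #|blocks (translate Q c)|
          = 6 * \sum_(c in Q) 10 * #|blocks (translate Q c)|.
  by rewrite big_distrr /=; apply: eq_bigr => c _; rewrite mulnA.
move: sphere3 uncovered3 covered3 uncov C3.
set Su := \sum_(c in Q) _; set Sc := \sum_(c in Q) _; set B := \sum_(c in Q) _.
set F := \sum_x _; set M := #|Q|; set C := 'C(_, 3).
case: n => [|[|[|p]]] /= sphere3 uncovered3 covered3 uncov C3; try by rewrite !muln0.
have : 6 * Su <= p.+3 * (M * p.+2) by rewrite -uncov; nia.
nia.
Qed.

Lemma blocks_through_card Q : set0 \in Q -> mindist5 Q -> 3 %| n ->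
  2 * 2 ^ n = #|Q| * n.+1 ^ 2 ->
  forall r s, r != s -> 3 * #|blocks_through Q r s| = n - 3.
Proof.
move=> Q0 Q5 n3 Qcard r s rs.
have blocks_max c : c \in Q -> 60 * #|blocks (translate Q c)| <= n * (n.-1 * (n - 3)).
  by move=> _; rewrite (card_blocks_leqif (@translate_mindist5 Q c Q5) n3).
have sum_eq : \sum_(c in Q) 60 * #|blocks (translate Q c)|
              == \sum_(c in Q) n * (n.-1 * (n - 3)).
  by rewrite eqn_leq leq_sum //= sum_nat_const sum_card_blocks_translate_lb.
move: sum_eq; rewrite (leqif_sum (fun c Qc => leqif_eq (blocks_max c Qc))) => /forall_inP/(_ _ Q0).
rewrite translate0 (card_blocks_leqif Q5 n3) => /forallP/(_ r)/forallP/(_ s).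
by rewrite rs => /eqP.
Qed.

Lemma unique_point_off_blocks Q r s : mindist5 Q -> r != s -> 3 < n ->
  3 * #|blocks_through Q r s| = n - 3 ->
  exists! t, forall D, D \in blocks_through Q r s -> t \notin D.
Proof.
move=> Q5 rs n_gt3 bt3.
have [D0 bD0] : exists D0, D0 \in blocks_through Q r s.
  apply/set0Pn; rewrite -card_gt0.
  by move: n_gt3 bt3; set b := #|blocks_through _ _ _|; lia.
have [t tE] : exists t, ~: (blocks_cover Q r s :|: [set r; s]) = [set t].
  have disj : [disjoint blocks_cover Q r s & [set r; s]].
    by rewrite -[[set r; s]]setCK -subsets_disjoint blocks_cover_sub.
  apply/cards1P; have := cardsC (blocks_cover Q r s :|: [set r; s]).
  have := leq_card_setU (blocks_cover Q r s) [set r; s]; rewrite disj => -[_ /eqP->].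
  by rewrite card_blocks_cover // cards2 rs; lia.
have offE t' : (t' == t) = (t' \notin blocks_cover Q r s) && (t' \notin [set r; s]).
  by rewrite -in_set1 -tE !inE negb_or.
exists t; split=> [D bD|t' t'_off].
  apply: contraL (eqxx t); rewrite offE negb_and !negbK orbC => tD.
  by case: (boolP (t \in [set r; s])) => //= trs; apply/bigcupP; exists D; rewrite // inE trs.
apply/esym/eqP; rewrite offE; apply/andP; split.
  by apply/bigcupP=> -[D bD /setDP[t'D _]]; move: (t'_off D bD); rewrite t'D.
move: (t'_off D0 bD0); rewrite !inE; move: bD0; rewrite !inE => /and4P[_ _ rD sD].
by apply: contra => /orP[]/eqP->.
Qed.

End Codes.

Lemma hdist_supp n (x y : bvec n) : hdist x y = sdist (supp x) (supp y).
Proof. by apply: eq_card => i; rewrite in_symdiff !inE; case: (x i); case: (y i). Qed.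

Lemma wt_supp n (x : bvec n) : wt x = #|supp x|.
Proof. by apply: eq_card => i; rewrite !inE ffunE; case: (x i). Qed.

Lemma hdistxx n (x : bvec n) : hdist x x = 0.
Proof. by apply: eq_card0 => i; rewrite !inE eqxx. Qed.

Lemma supp_inj n : injective (@supp n).
Proof. by move=> x y /setP xy; apply/ffunP=> i; have := xy i; rewrite !inE => /eqP; case: eqP. Qed.

Lemma supp_zerov n : supp (zerov n) = set0.
Proof. by apply/setP=> i; rewrite !inE ffunE. Qed.

Lemma hdist_puncture n (j : 'I_n.+1) (u v : bvec n.+1) :
  hdist u v <= (hdist (puncture j u) (puncture j v)).+1.
Proof.
set S := [set i | puncture j u i != puncture j v i].
have sub : [set i | u i != v i] \subset j |: [set lift j i | i in S].
  apply/subsetP=> i; rewrite !inE.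
  case: (unliftP j i) => [k -> | ->] uv; last by rewrite eqxx.
  by apply/orP; right; apply/imsetP; exists k; rewrite // inE !ffunE.
apply: leq_trans (subset_leq_card sub) _; rewrite cardsU1.
apply: (@leq_trans (1 + #|S|)); last by rewrite add1n.
exact: leq_add (leq_b1 _) (leq_imset_card _ _).
Qed.

Lemma puncture_dist n (C : {set bvec n.+1}) (j : 'I_n.+1) :
  (forall u v, u \in C -> v \in C -> u != v -> 6 <= hdist u v) ->
  forall u v, u \in C -> v \in C -> u != v -> 5 <= hdist (puncture j u) (puncture j v).
Proof. by move=> C6 u v Cu Cv uv; have := C6 u v Cu Cv uv; have := hdist_puncture j u v; lia. Qed.

Lemma double_leq_exp2 m : 2 * m <= 2 ^ m.
Proof. by elim: m => // m IH; rewrite expnS; have := expn_gt0 2 m; lia. Qed.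

Lemma dvd3_exp2_even m : ~~ odd m -> 3 %| (2 ^ m).-1.
Proof.
move=> m_even; rewrite -(odd_double_half m) (negbTE m_even) add0n -muln2 mulnC expnM.
by rewrite -subn1 -eqn_mod_dvd ?expn_gt0 // -modnXm exp1n.
Qed.

Lemma punctured_preparata_params n (P : {set bvec n}) : punctured_preparata P ->
  [/\ forall x y, x \in P -> y \in P -> x != y -> 5 <= hdist x y,
      3 %| n, 3 < n & 2 * 2 ^ n = #|P| * n.+1 ^ 2].
Proof.
move=> [C [j [[m [m_even m_ge4 Nm [C6 _] Ccard]] ->]]].
have injC : {in C &, injective (puncture j)}.
  move=> u v Cu Cv juv; apply/eqP; apply: contraT => uv.
  by have := puncture_dist j C6 Cu Cv uv; rewrite juv hdistxx.
split.
- move=> _ _ /imsetP[u Cu ->] /imsetP[v Cv ->] uv.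
  by apply: (puncture_dist j C6 Cu Cv); apply: contra_neq uv => ->.
- by have := dvd3_exp2_even m_even; rewrite -Nm.
- by have := leq_pexp2l (isT : 0 < 2) m_ge4; rewrite -Nm; lia.
rewrite card_in_imset // Ccard -expnS Nm -[in RHS]expnM mulnC (mulnC m 2).
rewrite [RHS]mulnC divnK //.
by rewrite dvdn_exp2l // double_leq_exp2.
Qed.

Lemma supp_mindist5 n (P : {set bvec n}) :
  (forall x y, x \in P -> y \in P -> x != y -> 5 <= hdist x y) -> mindist5 [set supp x | x in P].
Proof.
move=> P5 _ _ /imsetP[x Px ->] /imsetP[y Py ->] xy; rewrite -hdist_supp.
by apply: P5 => //; apply: contra_neq xy => ->.
Qed.

Lemma off_blocks_supp n (P : {set bvec n}) r s t :
  (forall c, c \in P -> wt c = 5 -> c r -> c s -> ~~ c t) <->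
  (forall D, D \in blocks_through [set supp x | x in P] r s -> t \notin D).
Proof.
split=> [offP _ /setIdP[/imsetP[c Pc ->]] | offQ c Pc c5 cr cs].
  by rewrite -wt_supp !inE => /and3P[/eqP c5 cr cs]; apply: offP.
by have := offQ (supp c); rewrite !inE imset_f // -wt_supp c5 cr cs; apply.
Qed.

Theorem corollary1 (n : nat) (P : {set bvec n}) :
  punctured_preparata P -> reduced P ->
  forall r s : 'I_n, r != s ->
  exists! t : 'I_n,
    forall c : bvec n, c \in P -> wt c = 5 -> c r -> c s -> ~~ c t.
Proof.
move=> PP P0 r s rs.
have [P5 n3 n_gt3 Pcard] := punctured_preparata_params PP.
pose Q := [set supp x | x in P].
have Q5 : mindist5 Q := supp_mindist5 P5.
have Q0 : set0 \in Q by rewrite -(supp_zerov n) imset_f.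
have Qcard : #|Q| = #|P| by apply: card_imset; apply: supp_inj.
have bt3 : 3 * #|blocks_through Q r s| = n - 3.
  by move: (blocks_through_card Q0 Q5); rewrite card_ord Qcard; apply.
have := unique_point_off_blocks Q5 rs; rewrite card_ord => /(_ n_gt3 bt3)[t [t_off t_uniq]].
exists t; split=> [|t' /off_blocks_supp t'_off]; first exact/off_blocks_supp.
exact: t_uniq.
Qed.
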